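(* Let $G$ and $H$ be finite groups with $\mathrm{diam}(\Delta(G\times H))\le 2$. Then $\mathrm{diam}(\Delta(G))\le 2$ or $\mathrm{diam}(\Delta(H))\le 2$.
   Context: For a finite group $X$, the cyclic graph $\Delta(X)$ has vertex set $X^{\#}=X\setminus\{1\}$, and distinct vertices $x,y$ are adjacent if and only if the subgroup $\langle x,y\rangle$ is cyclic. The diameter is the maximum graph distance between two vertices, taken to be $\infty$ if the graph is disconnected. *)

From mathcomp Require Import all_boot all_fingroup all_solvable.
Set Implicit Arguments. Unset Strict Implicit. Unset Printing Implicit Defensive.
Local Open Scope group_scope.

(* Cyclic graph Delta(X) of a finite group X (taken as the whole finGroupType):
   vertices are the non-identity elements; distinct x, y adjacent iff <x,y> cyclic. *)
Definition cyc_vertex (gT : finGroupType) (x : gT) : bool := x != 1.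

Definition cyc_adj (gT : finGroupType) (x y : gT) : bool :=
  [&& x != 1, y != 1, x != y & cyclic <<[set x; y]>>].

Definition cyc_diam_le2 (gT : finGroupType) : Prop :=
  forall x y : gT, x != 1 -> y != 1 ->
    x = y \/ cyc_adj x y \/ exists z : gT, cyc_adj x z /\ cyc_adj z y.

(* A vertex z of the cyclic graph lies on a path of length at most 2 from x to y
   exactly when <x, z> and <z, y> are both cyclic (z = x or z = y covers the
   shorter paths).  If x, y in G and x', y' in H are at distance > 2, take such
   a z = (z1, z2) for (x, x') and (y, y') in G x H: projecting the two cyclic
   subgroups to the factors shows that z1 = 1 and z2 = 1, so z = 1. *)

From mathcomp Require Import all_boot all_fingroup all_solvable.
From Stdlib Require Import Classical.

Set Implicit Arguments.
Unset Strict Implicit.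
Unset Printing Implicit Defensive.

Local Open Scope group_scope.

Lemma morphim_cyclic_gen2 (aT rT : finGroupType) (D : {group aT})
    (f : {morphism D >-> rT}) (x y : aT) :
  x \in D -> y \in D -> cyclic <<[set x; y]>> -> cyclic <<[set f x; f y]>>.
Proof.
move=> Dx Dy /(morphim_cyclic f).
by rewrite morphim_gen ?morphimU ?morphim_set1 // subUset !sub1set Dx.
Qed.

Lemma cyclic_gen_set1 (gT : finGroupType) (x : gT) : cyclic <<[set x; x]>>.
Proof. by rewrite setUid cycle_cyclic. Qed.

Section CyclicLink.

Variable gT : finGroupType.
Implicit Types x y z : gT.

Definition cyc_linked x y : Prop :=
  exists2 z, z != 1 & cyclic <<[set x; z]>> /\ cyclic <<[set z; y]>>.

Lemma cyc_diam_le2P :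
  cyc_diam_le2 gT <-> forall x y, x != 1 -> y != 1 -> cyc_linked x y.
Proof.
split=> [diam x y x1 y1 | linked x y x1 y1].
  case: (diam x y x1 y1) => [<- | [/and4P[_ _ _ cxy] | [z [xz zy]]]].
  - by exists x; rewrite ?cyclic_gen_set1.
  - by exists y; rewrite ?cyclic_gen_set1.
  - case/and4P: xz => _ z1 _ cxz; case/and4P: zy => _ _ _ czy.
    by exists z.
have [<- | xy] := eqVneq x y; first by left.
right; case: (linked x y x1 y1) => z z1 [cxz czy].
have [zx | nzx] := eqVneq z x.
  by left; apply/and4P; split; rewrite // -zx.
have [zy | nzy] := eqVneq z y.
  by left; apply/and4P; split; rewrite // -zy.
by right; exists z; split; apply/and4P; split; rewrite // eq_sym.
Qed.

Lemma not_cyc_diam_le2 :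
  ~ cyc_diam_le2 gT -> exists x y, [/\ x != 1, y != 1 & ~ cyc_linked x y].
Proof.
move/cyc_diam_le2P=> far; apply: NNPP => nofar; apply: far => x y x1 y1.
by apply: NNPP => nlinked; apply: nofar; exists x, y.
Qed.

End CyclicLink.

Lemma cyc_linked_pair (gT hT : finGroupType) (x y : gT) (x' y' : hT) :
  cyc_linked (x, x') (y, y') -> cyc_linked x y \/ cyc_linked x' y'.
Proof.
case=> [[a b] ab1 [cxz czy]].
have fst_cyclic := morphim_cyclic_gen2 (fst_morphism gT hT) (in_setT _) (in_setT _).
have snd_cyclic := morphim_cyclic_gen2 (snd_morphism gT hT) (in_setT _) (in_setT _).
have [a1 | b1] : a != 1 \/ b != 1.
  by apply/orP; apply: contraR ab1 => /norP[/negPn/eqP-> /negPn/eqP->].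
- by left; exists a => //; split; [apply: fst_cyclic cxz | apply: fst_cyclic czy].
- by right; exists b => //; split; [apply: snd_cyclic cxz | apply: snd_cyclic czy].
Qed.

Theorem theorem4p3 (gT hT : finGroupType) :
  cyc_diam_le2 (gT * hT)%type -> cyc_diam_le2 gT \/ cyc_diam_le2 hT.
Proof.
move=> /cyc_diam_le2P linked.
have [diamG | /not_cyc_diam_le2 [x [y [x1 y1 nxy]]]] := classic (cyc_diam_le2 gT).
  by left.
have [diamH | /not_cyc_diam_le2 [x' [y' [x1' y1' nxy']]]] := classic (cyc_diam_le2 hT).
  by right.
have xx1 : (x, x') != 1 by apply: contra x1 => /eqP[-> _].
have yy1 : (y, y') != 1 by apply: contra y1 => /eqP[-> _].
by case: (cyc_linked_pair (linked _ _ xx1 yy1)).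
Qed.
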